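(* Let $X$ be a real or complex Banach space, $(A(n))_{n\in\mathbb{N}}$ a sequence in $\mathcal{B}(X)$, and $P:\mathbb{N}\to\mathcal{B}(X)$ a family of projections compatible with the system $x_{n+1}=A(n)x_n$, with complementary family $Q(n)=I-P(n)$. Then the system is $P$-uniformly exponentially dichotomic if and only if there exists a constant $D>0$ such that \[ \sum_{j=m}^{\infty}\|\mathcal{A}_P(j,n)x\|+\sum_{k=n}^{m}\|\mathcal{A}_Q(k,n)x\|\le D\big(\|\mathcal{A}_P(m,n)x\|+\|\mathcal{A}_Q(m,n)x\|\big) \] for all $(m,n)\in\Delta$ and all $x\in X$.
   Context: $\mathbb{N}$ denotes the set of positive integers; $\mathcal{B}(X)$ is the Banach algebra of bounded linear operators on $X$, and $I$ is the identity operator. $\Delta=\{(m,n)\in\mathbb{N}^2: m\ge n\}$. A family of projections is a map $P:\mathbb{N}\to\mathcal{B}(X)$ with $P(n)^2=P(n)$ for all $n$; its complementary family is $Q(n)=I-P(n)$. $P$ is compatible with the system $x_{n+1}=A(n)x_n$ if $A(n+1)P(n)=P(n+1)A(n+1)$ for all $n\in\mathbb{N}$. For $(m,n)\in\Delta$ define $\mathcal{A}_P(m,n)=A(m)\cdots A(n+1)P(n)$ if $m>n$ and $\mathcal{A}_P(n,n)=P(n)$; similarly $\mathcal{A}_Q(m,n)=A(m)\cdots A(n+1)Q(n)$ if $m>n$ and $\mathcal{A}_Q(n,n)=Q(n)$. The system is $P$-uniformly exponentially dichotomic if there exist constants $N\ge1$ and $\alpha>0$ such that $e^{\alpha(m-n)}\big(\|\mathcal{A}_P(m,n)x\|+\|Q(n)x\|\big)\le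 N\big(\|P(n)x\|+\|\mathcal{A}_Q(m,n)x\|\big)$ for all $(m,n)\in\Delta$, $x\in X$. *)

From HB Require Import structures.
From mathcomp Require Import all_boot all_order all_algebra.
From mathcomp Require Import all_classical all_reals all_analysis.
Set Implicit Arguments. Unset Strict Implicit. Unset Printing Implicit Defensive.
Import Order.TTheory GRing.Theory Num.Theory.
Import numFieldNormedType.Exports.
Local Open Scope ring_scope.

Section Evolution.
Context {R : realType} {X : normedModType R}.

Fixpoint evol (A : nat -> X -> X) (n k : nat) (x : X) : X :=
  match k with
  | 0 => x
  | k'.+1 => A (n + k'.+1)%N (evol A n k' x)
  end.

Definition compl (P : nat -> X -> X) (n : nat) (x : X) : X := x - P n x.

(* A_P(m,n) x = A(m)...A(n+1) P(n) x  (and P(n) x if m = n) *)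
Definition cocycleP (A P : nat -> X -> X) (m n : nat) (x : X) : X :=
  evol A n (m - n) (P n x).

(* A_Q(m,n) x = A(m)...A(n+1) Q(n) x  (and Q(n) x if m = n) *)
Definition cocycleQ (A P : nat -> X -> X) (m n : nat) (x : X) : X :=
  evol A n (m - n) (compl P n x).

Definition P_UED (A P : nat -> X -> X) : Prop :=
  exists (N alpha : R), 1 <= N /\ 0 < alpha /\
    forall (m n : nat) (x : X), (1 <= n)%N -> (n <= m)%N ->
      expR (alpha * (m - n)%:R) * (`|cocycleP A P m n x| + `|compl P n x|)
      <= N * (`|P n x| + `|cocycleQ A P m n x|).

End Evolution.

From HB Require Import structures.
From mathcomp Require Import all_boot all_order all_algebra.
From mathcomp Require Import all_classical all_reals all_analysis.
From mathcomp Require Import zify lra.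
Import Order.TTheory GRing.Theory Num.Theory.
Import numFieldNormedType.Exports.
Set Implicit Arguments. Unset Strict Implicit. Unset Printing Implicit Defensive.
Local Open Scope ring_scope.

(* If the system is dichotomic with constants N, alpha, the estimate applied to
   A_P(m,n)x (a fixed point of P(m)) and to A_Q(k,n)x (in the kernel of P(k))
   gives |A_P(j,n)x| <= N e^(-alpha(j-m)) |A_P(m,n)x| for j >= m and
   |A_Q(k,n)x| <= N e^(-alpha(m-k)) |A_Q(m,n)x| for k <= m; summing two
   geometric series gives the bound with D = N / (1 - e^(-alpha)).
   Conversely, applied to P(n)x the sum bound says that the tails S_m of the
   series of |A_P(j,n)x| satisfy S_(m+1) <= D |A_P(m,n)x| = D (S_m - S_(m+1)),
   so they shrink by the factor 1 + 1/D at each step; applied to Q(n)x it says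
   that the partial sums of |A_Q(k,n)x| grow by the same factor.  This is the
   dichotomy with e^alpha = 1 + 1/D and N = D + 1. *)

Section GeometricSums.
Variable R : realType.

Lemma sumr_expr_subn_le (r : R) a b : 0 < r -> r < 1 ->
  \sum_(a <= i < b) r ^+ (i - a) <= (1 - r)^-1.
Proof.
move=> r0 r1; rewrite -{1}(add0n a) big_addn.
under eq_bigr do rewrite addnK.
have := geometric_le_lim (b - a) ler01 r0.
rewrite ger0_norm ?(ltW r0) // seriesEnat mul1r /=.
by under eq_bigr do rewrite /geometric /= mul1r; apply.
Qed.

Lemma sumr_expr_rsubn_le (r : R) a b : 0 < r -> r < 1 ->
  \sum_(a <= i < b.+1) r ^+ (b - i) <= (1 - r)^-1.
Proof.
move=> r0 r1; rewrite big_nat_rev.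
rewrite (eq_big_nat _ _ (F2 := fun i => r ^+ (i - a))); first exact: sumr_expr_subn_le.
by move=> i /andP[ai ib]; congr (_ ^+ _); lia.
Qed.

Lemma expR_mul_le (alpha N u v : R) k :
  expR (alpha * k%:R) * u <= N * v -> u <= N * expR (- alpha) ^+ k * v.
Proof.
move=> h; have E0 := expR_gt0 (alpha * k%:R).
by rewrite expRN exprVn -expRM_natr mulrAC ler_pdivlMr // mulrC.
Qed.

End GeometricSums.

Section GeometricRatios.
Variable R : numFieldType.

Lemma geometric_decay (s : nat -> R) b : 0 <= b ->
  (forall e, s e.+1 * b <= s e) -> forall d, s d * b ^+ d <= s 0%N.
Proof.
move=> b0 hs; elim=> [|d IH]; first by rewrite mulr1.
apply: le_trans IH; rewrite exprS mulrA.
by apply: ler_wpM2r; [exact: exprn_ge0 | exact: hs].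
Qed.

Lemma geometric_growth (s : nat -> R) b : 0 <= b ->
  (forall e, s e * b <= s e.+1) -> forall d, s 0%N * b ^+ d <= s d.
Proof.
move=> b0 hs; elim=> [|d IH]; first by rewrite mulr1.
apply: le_trans (hs d); rewrite exprSr mulrA.
exact: ler_wpM2r.
Qed.

Variables (D : R) (n : nat).
Hypothesis D_gt0 : 0 < D.

Lemma tail_sum_decay (f : nat -> R) : (forall j, 0 <= f j) ->
  (forall m K, (n <= m)%N -> \sum_(m <= j < K) f j <= D * f m) ->
  forall d, f (n + d)%N * (1 + D^-1) ^+ d <= D * f n.
Proof.
move=> f_ge0 hf d; pose S e := \sum_((n + e)%N <= j < (n + d).+1) f j.
have b_ge0 : 0 <= 1 + D^-1 by rewrite addr_ge0 // invr_ge0 ltW.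
have S_step e : S e.+1 * (1 + D^-1) <= S e.
  rewrite /S addnS; case: (ltnP (n + e) (n + d).+1) => hK; last first.
    by rewrite big_geq ?mul0r ?sumr_ge0 // (leq_trans hK).
  rewrite [leRHS](big_ltn hK) mulrDr mulr1 addrC lerD2r.
  rewrite ler_pdivrMr // mulrC; apply: le_trans (hf _ (n + d).+1 (leq_addr e n)).
  by rewrite [leRHS](big_ltn hK) lerDr.
have S0_le : S 0%N <= D * f n by rewrite /S addn0; exact: hf.
have Sd : S d = f (n + d)%N by rewrite /S big_nat1.
by apply: le_trans S0_le; rewrite -Sd; exact: geometric_decay.
Qed.

Lemma partial_sum_growth (g : nat -> R) : (forall j, 0 <= g j) ->
  (forall m, (n <= m)%N -> \sum_(n <= k < m.+1) g k <= D * g m) ->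
  forall d, g n * (1 + D^-1) ^+ d <= D * g (n + d)%N.
Proof.
move=> g_ge0 hg d; pose T e := \sum_(n <= k < (n + e).+1) g k.
have b_ge0 : 0 <= 1 + D^-1 by rewrite addr_ge0 // invr_ge0 ltW.
have T_step e : T e * (1 + D^-1) <= T e.+1.
  have ne : (n <= (n + e).+1)%N by rewrite -addnS leq_addr.
  rewrite /T addnS [leRHS]big_nat_recr //= mulrDr mulr1 lerD2l.
  rewrite mulrC ler_pdivrMl //; apply: le_trans (hg _ ne).
  by rewrite [leRHS]big_nat_recr //= lerDl.
have := geometric_growth b_ge0 T_step d; rewrite {1}/T addn0 big_nat1 => /le_trans.
by apply; exact: hg (leq_addr _ _).
Qed.

End GeometricRatios.

Section Evolution.
Variables (R : realType) (X : normedModType R).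

Lemma evolD (A : nat -> X -> X) n k1 k2 y :
  evol A n (k1 + k2) y = evol A (n + k1) k2 (evol A n k1 y).
Proof. by elim: k2 => [|k2 IH]; rewrite ?addn0 // addnS /= IH -addnA !addnS. Qed.

Variable A : nat -> {linear X -> X}.
Local Notation Af := (fun k => A k : X -> X).

Lemma evol0 n k : evol Af n k 0 = 0.
Proof. by elim: k => //= k ->; rewrite linear0. Qed.

End Evolution.

Section Cocycles.
Variables (R : realType) (X : normedModType R) (A P : nat -> {linear X -> X}).
Hypothesis P_idem : forall n : nat, (1 <= n)%N -> forall x : X, P n (P n x) = P n x.
Hypothesis P_compat : forall n : nat, (1 <= n)%N ->
  forall x : X, A n.+1 (P n x) = P n.+1 (A n.+1 x).
Local Notation Af := (fun k => A k : X -> X).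
Local Notation Pf := (fun k => P k : X -> X).
Local Notation AP := (cocycleP Af Pf).
Local Notation AQ := (cocycleQ Af Pf).
Local Notation Q := (compl Pf).

Lemma P_evol n k y : (1 <= n)%N -> (n <= k)%N ->
  P k (evol Af n (k - n) y) = evol Af n (k - n) (P n y).
Proof.
move=> n1 nk; have P_evol_add d : P (n + d)%N (evol Af n d y) = evol Af n d (P n y).
  elim: d => [|d IH] /=; first by rewrite addn0.
  by rewrite addnS -P_compat ?IH // (leq_trans n1 (leq_addr _ _)).
by rewrite -{1}(subnKC nk) P_evol_add.
Qed.

Lemma compl_ker k y : P k y = 0 -> Q k y = y.
Proof. by move=> Py0; rewrite /compl Py0 subr0. Qed.

Lemma P_compl n x : (1 <= n)%N -> P n (Q n x) = 0.
Proof. by move=> n1; rewrite /compl linearB /= P_idem // subrr. Qed.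

Lemma P_cocycleP n m x : (1 <= n)%N -> (n <= m)%N -> P m (AP m n x) = AP m n x.
Proof. by move=> n1 nm; rewrite /cocycleP P_evol // P_idem. Qed.

Lemma compl_cocycleP n m x : (1 <= n)%N -> (n <= m)%N -> Q m (AP m n x) = 0.
Proof. by move=> n1 nm; rewrite /compl P_cocycleP // subrr. Qed.

Lemma P_cocycleQ n k x : (1 <= n)%N -> (n <= k)%N -> P k (AQ k n x) = 0.
Proof. by move=> n1 nk; rewrite /cocycleQ P_evol // P_compl // evol0. Qed.

Lemma cocycleP_comp n m j x : (1 <= n)%N -> (n <= m)%N -> (m <= j)%N ->
  AP j m (AP m n x) = AP j n x.
Proof.
move=> n1 nm mj; rewrite {1}/cocycleP P_cocycleP // /cocycleP.
by rewrite -{1}(subnKC nm) -evolD; congr evol; lia.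
Qed.

Lemma cocycleQ_comp n k m x : (1 <= n)%N -> (n <= k)%N -> (k <= m)%N ->
  AQ m k (AQ k n x) = AQ m n x.
Proof.
move=> n1 nk km; rewrite {1}/cocycleQ compl_ker ?P_cocycleQ // /cocycleQ.
by rewrite -{1}(subnKC nk) -evolD; congr evol; lia.
Qed.

Lemma cocycleQ_cocycleP n m j x : (1 <= n)%N -> (n <= m)%N -> AQ j m (AP m n x) = 0.
Proof. by move=> n1 nm; rewrite /cocycleQ compl_cocycleP // evol0. Qed.

Lemma cocycleP_cocycleQ n k m x : (1 <= n)%N -> (n <= k)%N -> AP m k (AQ k n x) = 0.
Proof. by move=> n1 nk; rewrite /cocycleP P_cocycleQ // evol0. Qed.

Lemma cocycleP_P n j x : (1 <= n)%N -> AP j n (P n x) = AP j n x.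
Proof. by move=> n1; rewrite /cocycleP P_idem. Qed.

Lemma cocycleQ_P n j x : (1 <= n)%N -> AQ j n (P n x) = 0.
Proof. by move=> n1; rewrite /cocycleQ /compl P_idem // subrr evol0. Qed.

Lemma cocycleP_compl n j x : (1 <= n)%N -> AP j n (Q n x) = 0.
Proof. by move=> n1; rewrite /cocycleP P_compl // evol0. Qed.

Lemma cocycleQ_compl n j x : (1 <= n)%N -> AQ j n (Q n x) = AQ j n x.
Proof. by move=> n1; rewrite {1}/cocycleQ compl_ker ?P_compl. Qed.

Definition series_dichotomy (D : R) : Prop :=
  forall (m n : nat) (x : X), (1 <= n)%N -> (n <= m)%N ->
    ((\sum_(m <= j <oo) (`|AP j n x|)%:E) + (\sum_(n <= k < m.+1) `|AQ k n x|)%:E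
     <= (D * (`|AP m n x| + `|AQ m n x|))%:E)%E.

Section FromUED.
Variables (N alpha : R).
Hypothesis UED : forall (m n : nat) (x : X), (1 <= n)%N -> (n <= m)%N ->
  expR (alpha * (m - n)%:R) * (`|AP m n x| + `|Q n x|) <= N * (`|P n x| + `|AQ m n x|).
Local Notation r := (expR (- alpha)).

Lemma cocycleP_decay n m j x : (1 <= n)%N -> (n <= m)%N -> (m <= j)%N ->
  `|AP j n x| <= N * r ^+ (j - m) * `|AP m n x|.
Proof.
move=> n1 nm mj; apply: expR_mul_le.
have := UED (AP m n x) (leq_trans n1 nm) mj.
by rewrite cocycleP_comp // compl_cocycleP // cocycleQ_cocycleP // P_cocycleP // normr0 !addr0.
Qed.

Lemma cocycleQ_growth n k m x : (1 <= n)%N -> (n <= k)%N -> (k <= m)%N ->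
  `|AQ k n x| <= N * r ^+ (m - k) * `|AQ m n x|.
Proof.
move=> n1 nk km; apply: expR_mul_le.
have := UED (AQ k n x) (leq_trans n1 nk) km.
by rewrite cocycleP_cocycleQ // compl_ker ?P_cocycleQ // cocycleQ_comp // normr0 !add0r.
Qed.

Lemma series_dichotomy_of_UED : 1 <= N -> 0 < alpha -> series_dichotomy (N / (1 - r)).
Proof.
move=> N1 alpha0 m n x n1 nm.
have r0 : 0 < r := expR_gt0 _.
have r1 : r < 1 by rewrite expR_lt1 oppr_lt0.
have N0 : 0 <= N by apply: le_trans N1.
rewrite mulrDr EFinD; apply: leeD.
- apply: (lime_le (is_cvg_ereal_nneg_natsum _)); first by move=> j _; rewrite lee_fin.
  apply: nearW => K; rewrite sumEFin lee_fin.
  apply: le_trans (ler_sum_nat (G := fun j => N * `|AP m n x| * r ^+ (j - m)) _) _.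
    by move=> j /andP[mj _]; rewrite mulrAC; exact: cocycleP_decay.
  rewrite -mulr_sumr [leRHS]mulrAC ler_wpM2l ?mulr_ge0 //; exact: sumr_expr_subn_le.
- rewrite lee_fin.
  apply: le_trans (ler_sum_nat (G := fun k => N * `|AQ m n x| * r ^+ (m - k)) _) _.
    by move=> k /andP[nk km]; rewrite mulrAC; exact: cocycleQ_growth.
  rewrite -mulr_sumr [leRHS]mulrAC ler_wpM2l ?mulr_ge0 //; exact: sumr_expr_rsubn_le.
Qed.

End FromUED.

Section ToUED.
Variable D : R.
Hypotheses (D_gt0 : 0 < D) (hD : series_dichotomy D).

Lemma cocycleP_sum_le n m K x : (1 <= n)%N -> (n <= m)%N ->
  \sum_(m <= j < K) `|AP j n x| <= D * `|AP m n x|.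
Proof.
move=> n1 nm; have := hD (P n x) n1 nm.
rewrite cocycleQ_P // normr0 addr0 cocycleP_P // => h.
rewrite -lee_fin -sumEFin; apply: le_trans h.
apply: le_trans (lee_paddr _ (lexx _)); last by rewrite lee_fin sumr_ge0.
under eq_eseriesr do rewrite cocycleP_P //.
exact: nneseries_lim_ge.
Qed.

Lemma cocycleQ_sum_le n m x : (1 <= n)%N -> (n <= m)%N ->
  \sum_(n <= k < m.+1) `|AQ k n x| <= D * `|AQ m n x|.
Proof.
move=> n1 nm; have := hD (Q n x) n1 nm.
rewrite cocycleP_compl // normr0 add0r cocycleQ_compl // => h.
rewrite -lee_fin; apply: le_trans h.
apply: lee_paddl; first exact: nneseries_ge0.
by rewrite lee_fin ler_sum // => k _; rewrite cocycleQ_compl.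
Qed.

Lemma UED_of_series_dichotomy : P_UED Af Pf.
Proof.
have b1 : 1 < 1 + D^-1 by rewrite ltrDl invr_gt0.
exists (D + 1), (ln (1 + D^-1)); split; first by rewrite lerDr ltW.
split; first exact: ln_gt0.
move=> m n x n1 nm; rewrite mulrC expRM_natr lnK ?posrE ?(lt_trans ltr01) //.
have := tail_sum_decay D_gt0 (fun j => normr_ge0 _)
  (fun m' K nm' => cocycleP_sum_le K x n1 nm') (m - n).
have := partial_sum_growth D_gt0 (fun j => normr_ge0 (AQ j n x))
  (fun m' nm' => cocycleQ_sum_le x n1 nm') (m - n).
rewrite subnKC // {2 3}/cocycleP {1}/cocycleQ subnn /=.
set p := `|AP m n x|; set q := `|AQ m n x|; set e := _ ^+ _.
have p0 : 0 <= p := normr_ge0 _; have q0 : 0 <= q := normr_ge0 _.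
have u0 : 0 <= `|Q n x| := normr_ge0 _; have v0 : 0 <= `|P n x| := normr_ge0 _.
move=> hQ hP; nra.
Qed.

End ToUED.

End Cocycles.

Theorem mainTheorem3 (R : realType) (X : completeNormedModType R)
  (A : nat -> {linear X -> X}) (P : nat -> {linear X -> X})
  (hAcont : forall n : nat, (1 <= n)%N -> continuous (A n))
  (hPcont : forall n : nat, (1 <= n)%N -> continuous (P n))
  (hPproj : forall n : nat, (1 <= n)%N -> forall x : X, P n (P n x) = P n x)
  (hcompat : forall n : nat, (1 <= n)%N ->
     forall x : X, A n.+1 (P n x) = P n.+1 (A n.+1 x)) :
  P_UED (fun n => A n : X -> X) (fun n => P n : X -> X) <->
  exists D : R, 0 < D /\
    forall (m n : nat) (x : X), (1 <= n)%N -> (n <= m)%N ->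
      ((\sum_(m <= j <oo) (`|cocycleP (fun k => A k : X -> X) (fun k => P k : X -> X) j n x|)%:E)
       + (\sum_(n <= k < m.+1) `|cocycleQ (fun k => A k : X -> X) (fun k => P k : X -> X) k n x|)%:E
       <= (D * (`|cocycleP (fun k => A k : X -> X) (fun k => P k : X -> X) m n x|
               + `|cocycleQ (fun k => A k : X -> X) (fun k => P k : X -> X) m n x|))%:E)%E.
Proof.
split.
- case=> N [alpha [N1 [alpha0 hUED]]].
  exists (N / (1 - expR (- alpha))); split.
    by rewrite divr_gt0 ?subr_gt0 ?expR_lt1 ?oppr_lt0 // (lt_le_trans ltr01).
  exact (series_dichotomy_of_UED hPproj hcompat hUED N1 alpha0).
- by case=> D [D0 hD]; exact (UED_of_series_dichotomy hPproj D0 hD).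
Qed.
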